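(* Let $k$ be an algebraically closed field, let $\lambda=(\lambda_1\ge\lambda_2\ge\dots)$ be a partition of $n$ (with $\lambda_j=0$ for $j$ beyond its length), and let $X\in\mathfrak{gl}_n(k)$ be a nilpotent matrix whose Jordan block sizes are given by $\lambda$. Let $1\le i\le n-1$. (i) Every $i$-dimensional subspace $W$ of $V=k^n$ contains an $X$-invariant subspace $U$ with $\dim U\ge\sum_{j>n-i}\lambda_j$. (ii) The upper-left $i\times i$ submatrix $X_{\le i,\le i}$ of $X$ has stable rank at most $d_{\lambda,i}:=i-\sum_{j>n-i}\lambda_j$. *)

From HB Require Import structures.
From mathcomp Require Import all_boot all_order all_algebra.
Set Implicit Arguments. Unset Strict Implicit. Unset Printing Implicit Defensive.
Import Order.TTheory GRing.Theory Num.Theory.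
Local Open Scope ring_scope.

(* [la] is a partition of [n]: a weakly decreasing list of positive parts
   summing to [n].  Parts beyond the length are 0 (nth 0 la j). *)
Definition is_partition (n : nat) (la : seq nat) : bool :=
  [&& sorted geq la, all (fun x => 0 < x)%N la & sumn la == n].

(* Nilpotent Jordan normal form with blocks of sizes la (in this order),
   each block an upper Jordan block (1's on the superdiagonal). *)
Definition nil_jordan (R : pzRingType) (n : nat) (la : seq nat) : 'M[R]_n :=
  \matrix_(r < n, c < n)
    (((c == r.+1 :> nat) && ((c : nat) \notin scanl addn 0%N la))%:R : R).

Definition has_jordan_type (R : fieldType) (n : nat) (X : 'M[R]_n)
  (la : seq nat) : Prop :=
  exists P : 'M[R]_n, P \in unitmx /\ X = P *m nil_jordan R n la *m invmx P.

(* Stable rank of a square matrix: the eventual (constant) value of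
   rank (A^m) for large m; for an m x m matrix it is attained at exponent m. *)
Definition stable_rank (R : fieldType) (m : nat) (A : 'M[R]_m) : nat :=
  \rank (A ^+ m).

Definition ul_sub (R : Type) (n i : nat) (h : (i <= n)%N) (X : 'M[R]_n) : 'M[R]_i :=
  \matrix_(r < i, c < i) X (widen_ord h r) (widen_ord h c).

(* sum_{j > n - i} lambda_j  (1-indexed), i.e. the sum of the parts of index
   (0-based) >= n - i. *)
Definition tail_sum (la : seq nat) (n i : nat) : nat := sumn (drop (n - i) la).

From HB Require Import structures.
From mathcomp Require Import all_boot all_order all_algebra.
From mathcomp Require Import zify.
Set Implicit Arguments. Unset Strict Implicit. Unset Printing Implicit Defensive.
Import Order.TTheory GRing.Theory Num.Theory.
Local Open Scope ring_scope.

(* The largest X-invariant subspace U of W is the intersection of the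
   preimages (X^m)^-1 W.  Along the chain im X^m + U, which descends from V
   to U, the step from m to m+1 loses at most min (codim W, rk X^m - rk X^(m+1))
   dimensions: the part of im X^m + U sent into U by X meets W inside U.  For
   Jordan type la the rank drop at m is the number of parts larger than m, and
   summing min (n - i, #{j | la_j > m}) over m gives the sum of the n - i
   largest parts; this proves (i).  For (ii), apply (i) to the span W of the
   first i basis vectors: X is nilpotent on U, and dim U <= i, so X^i kills U,
   and truncating to the first i coordinates embeds U into the kernel of the
   i-th power of the upper-left corner. *)

Section SubspaceDimensions.
Variables (F : fieldType) (vT : vectType F).

Lemma dimv_cap_preim (rT : vectType F) (f : 'Hom(vT, rT))
    (V : {vspace vT}) (U : {vspace rT}) :
  \dim (V :&: f @^-1: U) = (\dim (f @: V :&: U) + \dim (V :&: lker f))%N.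
Proof.
set K := (V :&: f @^-1: U)%VS.
have imK : (f @: K = f @: V :&: U)%VS.
  apply/vspaceP => y; apply/memv_imgP/memv_capP => [[x /memv_capP[xV xU] ->]|].
    by split; [apply: memv_img | rewrite memv_preim].
  by case=> /memv_imgP[x xV ->] fxU; exists x; rewrite // memv_cap xV -memv_preim.
have kerK : (K :&: lker f = V :&: lker f)%VS.
  apply/vspaceP => x; rewrite !memv_cap memv_ker -memv_preim.
  by case: eqP => [->|]; rewrite ?mem0v ?andbT ?andbF.
by rewrite -(limg_ker_dim f K) imK kerK addnC.
Qed.

Lemma dimv_limg_leq (rT : vectType F) (f : 'Hom(vT, rT)) (U : {vspace vT}) :
  (\dim (f @: U) <= \dim U)%N.
Proof. by rewrite -(limg_ker_dim f U) leq_addl. Qed.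

Lemma dimv_add_subv (A B U : {vspace vT}) : (B <= A)%VS ->
  (\dim (A + U) <= \dim (B + U) + (\dim A - \dim B))%N.
Proof.
move=> BA; have AUE : (A + U = A + (B + U))%VS.
  by rewrite addvA (addv_idPl BA).
have := dimv_sum_cap A (B + U); have := dimvS BA.
have : (\dim B <= \dim (A :&: (B + U)))%N by rewrite dimvS // subv_cap BA addvSl.
rewrite AUE; lia.
Qed.

(* dim V = dim (f @: V + U) - dim U + dim (V :&: f @^-1: U), and the last
   term is at most dim U + codim W. *)
Lemma dimv_leq_img_codim (f : 'End(vT)) (V U W B : {vspace vT}) :
  (V :&: f @^-1: U :&: W <= U)%VS -> (f @: V + U <= B)%VS ->
  (\dim V <= \dim B + (\dim {:vT} - \dim W))%N.
Proof.
move=> KW fVB; have := dimvS KW; have := dimvS fVB.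
have := dimv_cap_preim f V U; have := limg_ker_dim f V.
have := dimv_sum_cap (f @: V) U; have := dimv_sum_cap (V :&: f @^-1: U) W.
have := dimvS (subvf (V :&: f @^-1: U + W)); have := dimvS (subvf W).
lia.
Qed.

End SubspaceDimensions.

Definition mxlin (F : fieldType) (m n : nat) (M : 'M[F]_(m, n)) :
  'Hom('cV[F]_n, 'cV[F]_m) := linfun (mulmx M).

Section MatrixMaps.
Variable F : fieldType.

Lemma mxlinE m n (M : 'M[F]_(m, n)) v : mxlin M v = M *m v.
Proof. by rewrite lfunE. Qed.

Lemma mxlin_mul m n p (M : 'M[F]_(m, n)) (N : 'M[F]_(n, p)) :
  mxlin (M *m N) = (mxlin M \o mxlin N)%VF.
Proof. by apply/lfunP => v; rewrite comp_lfunE !mxlinE mulmxA. Qed.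

Lemma dim_cV n : \dim (fullv : {vspace 'cV[F]_n}) = n.
Proof. by rewrite dimvf /dim /= muln1. Qed.

Lemma dim_mxlin_linv m n (B : 'M[F]_(n, m)) (A : 'M[F]_(m, n)) U :
  B *m A = 1%:M -> \dim (mxlin A @: U) = \dim U.
Proof.
move=> BA; apply: limg_dim_eq; apply/eqP; rewrite -subv0; apply/subvP => v.
case/memv_capP => _; rewrite memv_ker mxlinE memv0 => /eqP Av.
by rewrite -[v]mul1mx -BA -mulmxA Av mulmx0.
Qed.

Lemma rank_leq_dim_limg m (M : 'M[F]_m) : (\rank M <= \dim (limg (mxlin M)))%N.
Proof.
set L := limg (mxlin M); set b := vbasis L.
pose B : 'M[F]_(m, \dim L) := \matrix_(a, k) b`_k a 0.
pose C : 'M[F]_(\dim L, m) := \matrix_(k, j) coord b k (col j M).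
have -> : M = B *m C.
  apply/matrixP => a j; rewrite !mxE.
  have colL : col j M \in L by rewrite colE -mxlinE memv_img ?memvf.
  have := congr1 (fun v : 'cV[F]_m => v a 0) (coord_vbasis colL).
  rewrite mxE summxE => ->; apply: eq_bigr => k _.
  by rewrite !mxE mulrC.
exact: leq_trans (mxrankM_maxl _ _) (rank_leq_col _).
Qed.

Lemma conjmx_pow n (P M : 'M[F]_n) m : P \in unitmx ->
  (P *m M *m invmx P) ^+ m = P *m M ^+ m *m invmx P.
Proof.
move=> Pu; elim: m => [|m IH]; first by rewrite !expr0 mulmx1 mulmxV.
by rewrite exprS IH exprS -!mulmxE !mulmxA mulmxKV.
Qed.

End MatrixMaps.

Section InvariantCore.
Variables (F : fieldType) (n : nat) (X : 'M[F]_n) (W : {vspace 'cV[F]_n}).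
Hypothesis Xn : X ^+ n = 0.

Definition inv_core := (\bigcap_(m < n.+1) (mxlin (X ^+ m) @^-1: W))%VS.

Lemma mem_inv_core u : (u \in inv_core) = [forall m : 'I_n.+1, X ^+ m *m u \in W].
Proof.
rewrite memvE; apply/subv_bigcapP/forallP => uW m.
  by have := uW m isT; rewrite -memvE -memv_preim mxlinE.
by move=> _; rewrite -memvE -memv_preim mxlinE.
Qed.

Lemma inv_core_sub : (inv_core <= W)%VS.
Proof.
by apply/subvP => u; rewrite mem_inv_core => /forallP/(_ ord0); rewrite mul1mx.
Qed.

Lemma inv_core_stable u : u \in inv_core -> X *m u \in inv_core.
Proof.
rewrite !mem_inv_core => /forallP uW; apply/forallP => m.
rewrite mulmxA mulmxE -exprSr.
have [lt_m_n|ge_m_n] := ltnP m n.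
  exact: (uW (Ordinal (lt_m_n : (m.+1 < n.+1)%N))).
have -> : m = n :> nat by apply/eqP; rewrite eqn_leq ge_m_n -ltnS ltn_ord.
by rewrite exprSr Xn mul0r mul0mx mem0v.
Qed.

Lemma mem_inv_core_mulmx x : x \in W -> X *m x \in inv_core -> x \in inv_core.
Proof.
move=> xW; rewrite !mem_inv_core => /forallP Xx_core.
apply/forallP => -[[|m] lt_m_n]; first by rewrite mul1mx.
by have := Xx_core (Ordinal (ltnW lt_m_n)); rewrite mulmxA mulmxE -exprSr.
Qed.

Definition pow_img m := limg (mxlin (X ^+ m)).

Lemma pow_img_succ m : pow_img m.+1 = (mxlin X @: pow_img m)%VS.
Proof. by rewrite /pow_img -limg_comp -mxlin_mul mulmxE -exprS. Qed.

Lemma pow_imgS m : (pow_img m.+1 <= pow_img m)%VS.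
Proof.
by rewrite /pow_img exprSr -mulmxE mxlin_mul limg_comp limgS ?subvf.
Qed.

Lemma dim_pow_img_core_step m :
  (\dim (pow_img m + inv_core) <= \dim (pow_img m.+1 + inv_core) + (n - \dim W))%N.
Proof.
rewrite -[n in (n - _)%N](dim_cV F).
apply: (dimv_leq_img_codim (f := mxlin X) (U := inv_core)).
  apply/subvP => x /memv_capP[/memv_capP[_]].
  by rewrite -memv_preim mxlinE => Xx xW; apply: mem_inv_core_mulmx.
rewrite limgD pow_img_succ -addvA addvS // subv_add subvv andbT.
by apply/subvP => _ /memv_imgP[u uU ->]; rewrite mxlinE inv_core_stable.
Qed.

Lemma pow_img0 : pow_img 0 = fullv.
Proof.
apply/vspaceP => v; rewrite memvf; apply/memv_imgP.
by exists v; rewrite ?memvf // mxlinE mul1mx.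
Qed.

Lemma inv_core_dim_bound :
  (n <= \dim inv_core +
     \sum_(m < n) minn (n - \dim W) (\dim (pow_img m) - \dim (pow_img m.+1)))%N.
Proof.
have step m : (\dim (pow_img m + inv_core) <= \dim (pow_img m.+1 + inv_core) +
    minn (n - \dim W) (\dim (pow_img m) - \dim (pow_img m.+1)))%N.
  by rewrite addn_minr leq_min dim_pow_img_core_step dimv_add_subv ?pow_imgS.
have telescope N : (\dim (pow_img 0 + inv_core) <= \dim (pow_img N + inv_core) +
    \sum_(m < N) minn (n - \dim W) (\dim (pow_img m) - \dim (pow_img m.+1)))%N.
  elim: N => [|N IH]; first by rewrite big_ord0 addn0.
  by rewrite big_ord_recr /= addnA (leq_trans IH) // addnAC leq_add2r step.
have pow_img_n : (pow_img n <= inv_core)%VS.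
  by apply/subvP => _ /memv_imgP[x _ ->]; rewrite mxlinE Xn mul0mx mem0v.
by have := telescope n; rewrite pow_img0 (addv_idPr pow_img_n) addvC addvf dim_cV.
Qed.

End InvariantCore.

Lemma foldl_addn (t : seq nat) : foldl addn 0%N t = sumn t.
Proof. exact: foldl_foldr addnA addnC 0%N t. Qed.

(* [0 :: scanl addn 0 s] lists the sums sumn (take j s), j <= size s: for
   nil_jordan, the first indices of the blocks together with n. *)
Section PartialSums.
Variable s : seq nat.
Local Notation S := (scanl addn 0%N s).

Lemma mem_sumn_scanl : s != [::] -> sumn s \in S.
Proof.
move=> s_nil; have s_gt0 : (0 < size s)%N by rewrite lt0n size_eq0.
rewrite -[s in sumn s](take_size s) -(prednK s_gt0) -foldl_addn -(nth_scanl 0%N).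
  by rewrite mem_nth // size_scanl prednK.
by rewrite prednK.
Qed.

Lemma long_block_start r m : all (fun x => 0 < x)%N s -> (r < sumn s)%N ->
  r \in 0%N :: S -> ~~ has (fun t => r < t <= r + m)%N S ->
  exists2 j, r = sumn (take j s) & (m < nth 0%N s j)%N.
Proof.
move=> s_pos r_lt r_start no_next; set j := index r (0%N :: S).
have j_le : (j <= size s)%N by rewrite -ltnS -(size_scanl addn 0%N) index_mem.
have rE : r = sumn (take j s).
  by rewrite -foldl_addn -(nth_cons_scanl 0%N) // nth_index.
have j_lt : (j < size s)%N.
  rewrite ltn_neqAle j_le andbT; apply: contraTneq r_lt => j_size.
  by rewrite rE j_size take_size ltnn.
exists j => //; rewrite ltnNge; apply: contra no_next => le_nth_m.
apply/hasP; exists (r + nth 0%N s j)%N.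
  rewrite rE -sumn_rcons -take_nth // -foldl_addn -(nth_scanl 0%N) //.
  by rewrite mem_nth // size_scanl.
by have := all_nthP 0%N s_pos j j_lt; lia.
Qed.

End PartialSums.

Lemma count_gt_take (s : seq nat) q m : sorted geq s ->
  count (fun x => m < x)%N (take q s) = minn q (count (fun x => m < x)%N s).
Proof.
elim: s q => [|x s IH] q /= s_sorted; first by rewrite minn0.
have x_ge : all (geq x) s := order_path_min (rev_trans leq_trans) s_sorted.
case: q => [|q] /=; first by rewrite min0n.
rewrite IH ?(path_sorted s_sorted) //.
case: (ltnP m x) => [_|le_x_m]; first by rewrite !add1n minnSS.
suff -> : count (fun x => m < x)%N s = 0%N by rewrite minn0.
apply/eqP; rewrite -leqn0 leqNgt -has_count; apply/hasPn => y ys.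
by rewrite -leqNgt (leq_trans (allP x_ge y ys) le_x_m).
Qed.

Lemma sum_count_gt_leq N (s : seq nat) :
  (\sum_(m < N) count (fun x => m < x)%N s <= sumn s)%N.
Proof.
have sum_ltn x : (\sum_(m < N) (m < x)%N)%N = minn x N.
  elim: N => [|N IH]; first by rewrite big_ord0 minn0.
  by rewrite big_ord_recr /= IH; case: (ltnP N x) => /=; lia.
elim: s => [|x s IH] /=; first by rewrite big1.
by rewrite big_split /= sum_ltn leq_add ?geq_minl.
Qed.

Section NilJordan.
Variables (F : fieldType) (n : nat) (la : seq nat).
Local Notation S := (scanl addn 0%N la).
Local Notation J := (nil_jordan F n la).

Lemma nil_jordan_mulmxE p (w : 'M[F]_(n, p)) r j : (J *m w) r j =
  \sum_(c < n) (((c == r.+1 :> nat) && ((c : nat) \notin S))%:R * w c j).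
Proof. by rewrite mxE; apply: eq_bigr => c _; rewrite mxE. Qed.

Lemma nil_jordan_pow_mulmx_eq0 p m (w : 'M[F]_(n, p)) (r : 'I_n) j :
  has (fun t => r < t <= r + m)%N S -> (J ^+ m *m w) r j = 0.
Proof.
elim: m r => [|m IH] r; first by case/hasP => t _; lia.
move=> next_start; rewrite exprS -mulmxE -mulmxA nil_jordan_mulmxE.
apply: big1 => c _; case: eqP => [cE|_]; last by rewrite mul0r.
have [cS|cS] := boolP ((c : nat) \in S); first by rewrite mul0r.
rewrite IH ?mulr0 //; case/hasP: next_start => t tS rt_lt; apply/hasP; exists t => //.
have : t != c :> nat by apply: contraNneq cS => <-.
by move/eqP; lia.
Qed.

Lemma nil_jordan_ker_coord (v : 'cV[F]_n) (c : 'I_n) :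
  J *m v = 0 -> (c : nat) \notin 0%N :: S -> v c 0 = 0.
Proof.
rewrite in_cons negb_or -lt0n => Jv /andP[c_gt0 cS].
have lt_c_n : (c.-1 < n)%N := leq_ltn_trans (leq_pred c) (ltn_ord c).
have : (J *m v) (Ordinal lt_c_n) 0 = 0 by rewrite Jv mxE.
rewrite nil_jordan_mulmxE /= prednK // (bigD1 c) //= eqxx cS mul1r.
rewrite big1 ?addr0 // => c' c'c.
by have /negbTE-> : c' != c :> nat := c'c; rewrite mul0r.
Qed.

Hypothesis sum_la : sumn la = n.

Lemma nil_jordan_nilpotent : J ^+ n = 0.
Proof.
apply/matrixP => r c; rewrite -[J ^+ n]mulmx1 nil_jordan_pow_mulmx_eq0 ?mxE //.
have n_gt0 : (0 < n)%N := leq_ltn_trans (leq0n r) (ltn_ord r).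
have la_nil : la != [::] by apply: contraTneq n_gt0 => la_nil; rewrite -sum_la la_nil.
apply/hasP; exists n; last by rewrite ltn_ord leq_addl.
by rewrite -[n in n \in _]sum_la mem_sumn_scanl.
Qed.

Hypothesis la_pos : all (fun x => 0 < x)%N la.

Lemma dim_pow_img_drop_nil_jordan m :
  (\dim (pow_img J m) - \dim (pow_img J m.+1) <= count (fun x => m < x)%N la)%N.
Proof.
rewrite pow_img_succ -{1}(limg_ker_dim (mxlin J) (pow_img J m)) addnK.
(* A vector killed by J is supported on block starts, and one in the image of
   J^m vanishes at r when a block starts in (r, r + m]. *)
pose e s : 'cV[F]_n := \col_(r < n) ((r == s :> nat)%:R).
set L := [seq e (sumn (take j la)) | j <- iota 0 (size la) & (m < nth 0%N la j)%N].
have sub : (pow_img J m :&: lker (mxlin J) <= <<L>>)%VS.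
  apply/subvP => v /memv_capP[/memv_imgP[w _]]; rewrite memv_ker !mxlinE => vE /eqP Jv.
  rewrite (matrix_sum_delta v); apply: memv_suml => r _; rewrite big_ord1.
  have [->|vr] := eqVneq (v r 0) 0; first by rewrite scale0r mem0v.
  apply/memvZ/memv_span/mapP.
  have [|||j rE m_lt] := long_block_start (r := r) (m := m) la_pos.
  - by rewrite sum_la ltn_ord.
  - by apply: contraNT vr => rS; rewrite (nil_jordan_ker_coord Jv rS) eqxx.
  - by apply: contra vr => next_start; rewrite vE nil_jordan_pow_mulmx_eq0.
  exists j; last by apply/matrixP => a b; rewrite !mxE ord1 -rE eqxx andbT.
  rewrite mem_filter m_lt mem_iota /=; apply: contraTT m_lt; rewrite -leqNgt => la_j.
  by rewrite nth_default.
apply: leq_trans (dimvS sub) (leq_trans (dim_span L) _).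
by rewrite size_map size_filter -[in X in (_ <= X)%N](mkseq_nth 0%N la) count_map.
Qed.

End NilJordan.

Section NilpotentInvariant.
Variables (F : fieldType) (n N : nat) (X : 'M[F]_n) (U : {vspace 'cV[F]_n}).
Hypothesis XN : X ^+ N = 0.
Hypothesis X_U : {in U, forall u, X *m u \in U}.

Let V m := (mxlin (X ^+ m) @: U)%VS.

Lemma dim_pow_img_invariant m : (\dim (V m) <= \dim U - m)%N.
Proof.
have V_succ k : V k.+1 = (mxlin X @: V k)%VS.
  by rewrite /V -limg_comp -mxlin_mul mulmxE -exprS.
have V_sub k : (V k.+1 <= V k)%VS.
  rewrite /V exprSr -mulmxE mxlin_mul limg_comp limgS //.
  by apply/subvP => _ /memv_imgP[u uU ->]; rewrite mxlinE X_U.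
have V_big k : V (N + k) = 0%VS.
  apply/eqP; rewrite -subv0; apply/subvP => _ /memv_imgP[u _ ->].
  by rewrite mxlinE exprD XN mul0r mul0mx mem0v.
elim: m => [|m IH]; first by rewrite subn0 dimv_limg_leq.
have [V_stable|V_strict] := eqVneq (V m.+1) (V m).
  have V_const j : V (j + m) = V m.
    by elim: j => [|j IHj] //; rewrite addSn V_succ IHj -V_succ.
  by rewrite V_stable -(V_const N) V_big dimv0.
have : (\dim (V m.+1) < \dim (V m))%N.
  by rewrite ltn_neqAle (dimv_leqif_eq (V_sub m)) V_strict dimvS.
lia.
Qed.

Lemma mxpow_dim_invariant_eq0 u : u \in U -> X ^+ \dim U *m u = 0.
Proof.
move=> uU; have := dim_pow_img_invariant (\dim U).
rewrite subnn leqn0 dimv_eq0 => /eqP V0.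
by apply/eqP; rewrite -memv0 -V0 -mxlinE memv_img.
Qed.

End NilpotentInvariant.

Lemma dim_pow_img_conj (F : fieldType) n (P M : 'M[F]_n) m : P \in unitmx ->
  \dim (pow_img (P *m M *m invmx P) m) = \dim (pow_img M m).
Proof.
move=> P_unit; have img_invP : limg (mxlin (invmx P)) = fullv.
  apply/vspaceP => v; rewrite memvf; apply/memv_imgP.
  by exists (P *m v); rewrite ?memvf // mxlinE mulKmx.
rewrite /pow_img conjmx_pow // !mxlin_mul !limg_comp img_invP.
exact: dim_mxlin_linv (mulVmx P_unit).
Qed.

Lemma conj_nil_jordan_nilpotent (F : fieldType) n la (P : 'M[F]_n) :
  sumn la = n -> P \in unitmx -> (P *m nil_jordan F n la *m invmx P) ^+ n = 0.
Proof.
by move=> sum_la P_unit; rewrite conjmx_pow // nil_jordan_nilpotent // mulmx0 mul0mx.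
Qed.

Lemma inv_core_dim_jordan (F : fieldType) n la (P : 'M[F]_n) (W : {vspace 'cV[F]_n}) :
  is_partition n la -> P \in unitmx ->
  (sumn (drop (n - \dim W) la) <=
     \dim (inv_core (P *m nil_jordan F n la *m invmx P) W))%N.
Proof.
case/and3P => la_sorted la_pos /eqP sum_la P_unit.
set J := nil_jordan F n la; set q := (n - \dim W)%N.
have X_nil := conj_nil_jordan_nilpotent sum_la P_unit.
have drops : (\sum_(m < n) minn q (\dim (pow_img (P *m J *m invmx P) m) -
    \dim (pow_img (P *m J *m invmx P) m.+1)) <= sumn (take q la))%N.
  apply: leq_trans (sum_count_gt_leq n (take q la)); apply: leq_sum => m _.
  rewrite !dim_pow_img_conj // count_gt_take // leq_min geq_minl /=.
  by apply: leq_trans (geq_minr _ _) _; apply: dim_pow_img_drop_nil_jordan.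
have := leq_trans (inv_core_dim_bound W X_nil) (leq_add (leqnn _) drops).
by rewrite -{1}sum_la -{1}(cat_take_drop q la) sumn_cat addnC leq_add2r.
Qed.

Section Compression.
Variables (F : fieldType) (n i N : nat) (E : 'M[F]_(n, i)) (T : 'M[F]_(i, n)).
Variables (X : 'M[F]_n) (U : {vspace 'cV[F]_n}).
Hypothesis TE : T *m E = 1%:M.
Hypothesis XN : X ^+ N = 0.
Hypothesis U_E : (U <= limg (mxlin E))%VS.
Hypothesis X_U : {in U, forall u, X *m u \in U}.

Lemma rank_compression_pow : (\rank ((T *m X *m E) ^+ i) <= i - \dim U)%N.
Proof.
set A := T *m X *m E.
have ETu u : u \in U -> E *m (T *m u) = u.
  move=> /(subvP U_E) /memv_imgP[v _ ->].
  by rewrite mxlinE (mulmxA T) TE mul1mx.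
have A_pow m u : u \in U -> A ^+ m *m (T *m u) = T *m (X ^+ m *m u).
  elim: m u => [|m IH] u uU; first by rewrite !mul1mx.
  by rewrite !exprSr -!mulmxE -!mulmxA ETu // IH ?X_U.
have dimU_i : (\dim U <= i)%N.
  by rewrite -(dim_cV F i) (leq_trans (dimvS U_E)) ?dimv_limg_leq.
have TU_ker : (mxlin T @: U <= lker (mxlin (A ^+ i)))%VS.
  apply/subvP => _ /memv_imgP[u uU ->]; rewrite memv_ker !mxlinE A_pow //.
  rewrite -[in X ^+ i](subnK dimU_i) exprD -mulmxE -mulmxA.
  by rewrite (mxpow_dim_invariant_eq0 XN) ?mulmx0.
have dimU_TU : (\dim U <= \dim (mxlin T @: U))%N.
  suff {1}<- : (mxlin E @: (mxlin T @: U) = U)%VS by apply: dimv_limg_leq.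
  rewrite -limg_comp; apply/vspaceP => u.
  apply/memv_imgP/idP => [[v vU ->]|uU]; last exists u => //;
    by rewrite comp_lfunE !mxlinE ETu.
have := limg_ker_dim (mxlin (A ^+ i)) fullv; rewrite capfv dim_cV.
have := rank_leq_dim_limg (A ^+ i); have := dimvS TU_ker; lia.
Qed.

End Compression.

Section UpperLeftCorner.
Variables (R : pzSemiRingType) (n i : nat) (h : (i <= n)%N).

Lemma pid_mx_mulmxE p (Y : 'M[R]_(n, p)) r b :
  ((pid_mx i : 'M[R]_(i, n)) *m Y) r b = Y (widen_ord h r) b.
Proof.
rewrite mxE (bigD1 (widen_ord h r)) //= mxE eqxx ltn_ord mul1r big1 ?addr0 // => a ne.
have /negbTE r_a : r != a :> nat.
  by apply: contraNneq ne => ra; apply/eqP/ord_inj/esym.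
by rewrite mxE r_a mul0r.
Qed.

Lemma mulmx_pid_mxE p (Y : 'M[R]_(p, n)) a c :
  (Y *m (pid_mx i : 'M[R]_(n, i))) a c = Y a (widen_ord h c).
Proof.
rewrite mxE (bigD1 (widen_ord h c)) //= mxE eqxx (ltn_ord c) mulr1 big1 ?addr0 // => b ne.
have /negbTE b_c : b != c :> nat by apply: contraNneq ne => bc; apply/eqP/ord_inj.
by rewrite mxE b_c mulr0.
Qed.

Lemma ul_sub_pid_mx (X : 'M[R]_n) : ul_sub h X = pid_mx i *m X *m pid_mx i.
Proof. by apply/matrixP => r c; rewrite mxE mulmx_pid_mxE pid_mx_mulmxE. Qed.

End UpperLeftCorner.

Theorem lemma2p1 (k : closedFieldType) (n : nat) (la : seq nat)
  (X : 'M[k]_n) (i : nat) (hi : (i < n)%N) :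
  is_partition n la ->
  has_jordan_type X la ->
  (1 <= i)%N ->
  (forall W : {vspace 'cV[k]_n}, \dim W = i ->
     exists U : {vspace 'cV[k]_n},
       (U <= W)%VS /\ {in U, forall u, X *m u \in U} /\
       (tail_sum la n i <= \dim U)%N) /\
  (stable_rank (ul_sub (ltnW hi) X) <= i - tail_sum la n i)%N.
Proof.
move=> la_part [P [P_unit ->]] _.
set Y := P *m nil_jordan k n la *m invmx P.
have Y_nil : Y ^+ n = 0.
  by case/and3P: la_part => _ _ /eqP sum_la; apply: conj_nil_jordan_nilpotent.
have core W : \dim W = i -> exists U : {vspace 'cV[k]_n},
    [/\ (U <= W)%VS, {in U, forall u, Y *m u \in U} & (tail_sum la n i <= \dim U)%N].
  move=> dimW; exists (inv_core Y W); split.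
  - exact: inv_core_sub.
  - exact: inv_core_stable.
  - by rewrite /tail_sum -dimW inv_core_dim_jordan.
split=> [W /core[U [UW Y_U dimU]] | ]; first by exists U.
have pid_mx_i : (pid_mx i : 'M[k]_(i, n)) *m pid_mx i = 1%:M.
  by rewrite mul_pid_mx !minnn (minn_idPr (ltnW hi)) pid_mx_1.
have [|U [UE Y_U dimU]] := core (limg (mxlin (pid_mx i : 'M[k]_(n, i)))).
  by rewrite (dim_mxlin_linv _ pid_mx_i) dim_cV.
rewrite /stable_rank ul_sub_pid_mx.
by apply: leq_trans (rank_compression_pow pid_mx_i Y_nil UE Y_U) _; rewrite leq_sub2l.
Qed.
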